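(* For $p=2$: $\nu_2((2^4))\ge 4$ and $\nu_2((3^4))\ge 5$.
   Context: $(y^k)$ denotes the partition with $k$ parts equal to $y$. For $\lambda\vdash n$, $S^\lambda_{\mathbb Z}$ is the integral Specht module spanned by polytabloids $e_t$ in the permutation module on $\lambda$-tabloids, which has the bilinear form making tabloids orthonormal. The $p$-Schaper number $\nu_p(\lambda)$ is the least $k$ such that $\overline{S^\lambda_k}/\overline{S^\lambda_{k+1}}\ne 0$, where $S^\lambda_i=\{x\in S^\lambda_{\mathbb Z}:p^i\mid\langle x,y\rangle\ \forall y\}$ and the bar is reduction mod $p$; equivalently, the largest $k$ with $p^k\mid\langle e_s,e_t\rangle$ for all $\lambda$-tableaux $s,t$. *)

From mathcomp Require Import all_boot all_order all_fingroup all_algebra.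
Unset Printing Implicit Defensive.
Import GRing.Theory Num.Theory.

(* A partition lam is a seq nat (weakly decreasing positive parts), n = sumn lam.
   Boxes of the Young diagram are numbered 0..n-1 in reading order (row by row).
   A lam-tableau is a bijection boxes -> entries {0..n-1}, i.e. s : 'S_n, with
   entry s b in box b. *)

Definition box_row (lam : seq nat) (i : nat) : nat :=
  count (fun r => sumn (take r.+1 lam) <= i) (iota 0 (size lam)).

Definition box_col (lam : seq nat) (i : nat) : nat :=
  i - sumn (take (box_row lam i) lam).

(* Row-assignment functions entry -> row; the lam-tabloids are those with
   row r of size lam_r. *)
Definition rowfun (lam : seq nat) := {ffun 'I_(sumn lam) -> 'I_(sumn lam).+1}.

Definition is_tabloid (lam : seq nat) (T : rowfun lam) : bool :=
  [forall r : 'I_(sumn lam).+1, #|[set j | T j == r]| == nth 0 lam r].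

Definition tabloid_of (lam : seq nat) (s : 'S_(sumn lam)) : rowfun lam :=
  [ffun j => inord (box_row lam ((s^-1)%g j))].

Definition col_stab (lam : seq nat) (s pi : 'S_(sumn lam)) : bool :=
  [forall j, box_col lam ((s^-1)%g (pi j)) == box_col lam ((s^-1)%g j)].

(* polytabloid e_s = sum_{pi in C_s} sgn(pi) {pi s}, as an element of the
   integral permutation module (coefficient function on tabloids).
   Note (s * pi)%g is the tableau b |-> pi (s b). *)
Definition polytabloid (lam : seq nat) (s : 'S_(sumn lam)) (T : rowfun lam) : int :=
  (\sum_(pi : 'S_(sumn lam) | col_stab lam s pi)
     (-1) ^+ odd_perm pi * ((tabloid_of lam (s * pi)%g == T)%:R))%R.

Definition tab_form (lam : seq nat) (x y : rowfun lam -> int) : int :=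
  (\sum_(T : rowfun lam | is_tabloid lam T) x T * y T)%R.

Definition gram (lam : seq nat) (s t : 'S_(sumn lam)) : int :=
  tab_form lam (polytabloid lam s) (polytabloid lam t).

(* p-Schaper number: the largest k with p^k | <e_s, e_t> for all tableaux s, t.
   The bound is harmless: <e_s,e_s> = |C_s| > 0, so for p >= 2 any such k is
   below the sum of all |<e_s,e_t>|. *)
Definition schaper_number (p : nat) (lam : seq nat) : nat :=
  \max_(k < (\sum_(s : 'S_(sumn lam)) \sum_(t : 'S_(sumn lam)) absz (gram lam s t)).+1
         | [forall s : 'S_(sumn lam), forall t : 'S_(sumn lam),
              ((p ^ k)%:Z %| gram lam s t)%Z]) k.

From mathcomp Require Import all_boot all_order all_fingroup all_algebra.
From mathcomp Require Import zify ring.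
Import GRing.Theory Num.Theory.

(* For a rectangle lam = (y^k) and tableaux s, t, the Gram entry <e_s, e_t> is
   a signed count of pairs (p, q) in C_s x C_t with {s p} = {t q}.  The group
   V x (C_s :&: C_t), where V is a group of row symmetries of the diagram,
   acts on these pairs preserving the sign, and the action is free when
   either V is trivial, or V moves every box and C_s :&: C_t fixes an entry.
   Orbit counting then gives |V| |C_s :&: C_t| | <e_s, e_t>.  The group
   C_s :&: C_t is a product of symmetric groups on the "cells" (entries in a
   given column of s and of t), whose sizes form a y x y table with all
   margins k; a singleton cell provides a fixed entry, so the cyclic row
   rotations (|V| = k) can be used.  For k = 4 and y = 2, 3 a finite check on
   such tables yields 2^4, resp. 2^5, dividing every Gram entry; since
   <e_1, e_1> = |C_1| is nonzero, this bounds the Schaper number. *)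

Section BlockStabilizers.
Variable T : finType.
Local Open Scope group_scope.

Definition fix_set (A : {set T}) : {set {perm T}} :=
  [set p : {perm T} | [forall x in A, p x == x]].

Lemma fix_set_group_set (A : {set T}) : group_set (fix_set A).
Proof.
apply/group_setP; split; first by rewrite inE; apply/forall_inP => x _; rewrite perm1.
move=> p q; rewrite !inE => /forall_inP p_fix /forall_inP q_fix.
by apply/forall_inP => x xA; rewrite permM (eqP (p_fix x xA)) (eqP (q_fix x xA)).
Qed.
Canonical fix_set_group (A : {set T}) := Group (fix_set_group_set A).

Lemma card_block_split (G : {group {perm T}}) (A : {set T}) :
  Sym A \subset G -> (forall p, p \in G -> forall x, (p x \in A) = (x \in A)) ->
  #|G| = (#|A|`! * #|G :&: fix_set A|)%N.
Proof.
move=> symA_sub_G G_stab.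
have symA_TI : Sym A :&: (G :&: fix_set A) = 1%g.
  apply/trivgP/subsetP => p; rewrite !inE => /and3P[p_onA _ /forall_inP p_fixA].
  apply/eqP/permP => x; rewrite perm1.
  case xA: (x \in A); first exact/eqP/p_fixA.
  by apply: (out_perm p_onA); rewrite xA.
rewrite -card_Sym -TI_cardMg //; congr #|pred_of_set _|.
apply/eqP; rewrite eqEsubset mulG_subG symA_sub_G subsetIl /= andbT.
apply/subsetP => p Gp.
have p_normA : p \in 'N(A | 'P) by apply/astabsP => x; rewrite /= G_stab.
set q := restr_perm A p.
have q_symA : q \in Sym A by rewrite inE restr_perm_on.
rewrite -(mulKVg q p); apply: imset2_f => //.
have Gq : q \in G by apply: (subsetP symA_sub_G).
rewrite !inE groupM ?groupV //=; apply/forall_inP => x xA.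
have qVx_A : q^-1 x \in A by rewrite (perm_closed x (perm_onV (restr_perm_on A p))).
by rewrite permM -(restr_permE p_normA qVx_A) -/q permKV.
Qed.

Lemma prod_fact_dvd_card (I : eqType) (r : seq I) (F : I -> {set T})
    (G : {group {perm T}}) :
  uniq r -> {in r &, forall i j, i != j -> [disjoint F i & F j]} ->
  {in r, forall i, Sym (F i) \subset G} ->
  {in r, forall i p, p \in G -> forall x, (p x \in F i) = (x \in F i)} ->
  (\prod_(i <- r) #|F i|`!) %| #|G|.
Proof.
elim: r G => [|i r IHr] G /=; first by rewrite big_nil dvd1n.
move=> /andP[i_notin_r r_uniq] disj symF_sub stabF.
have r_sub j : j \in r -> j \in i :: r by move=> jr; rewrite inE jr orbT.
rewrite big_cons (card_block_split _ _ (symF_sub i (mem_head _ _)) (stabF i (mem_head _ _))).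
rewrite dvdn_pmul2l ?fact_gt0 //; apply: (IHr (G :&: fix_set (F i))%G r_uniq).
- by move=> a b ar br; apply: disj; apply: r_sub.
- move=> j jr; rewrite subsetI symF_sub ?r_sub //=.
  apply/subsetP => p; rewrite !inE => p_onFj; apply/forall_inP => x xFi.
  have ij : i != j by apply: contraNneq i_notin_r => ->.
  apply/eqP/(out_perm p_onFj).
  by rewrite (disjointFr (disj i j (mem_head _ _) (r_sub j jr) ij) xFi).
- by move=> j jr p /setIP[Gp _] x; apply: stabF; rewrite ?r_sub.
Qed.

End BlockStabilizers.

(* Orbit counting: if G acts freely on T and w is G-invariant, every orbit
   contributes |G| times a single value, so |G| divides the total weight. *)
Lemma free_action_dvd_sum (aT : finGroupType) (T : finType)
    (to : {action aT &-> T}) (G : {group aT}) (w : T -> int) :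
  (forall x a, a \in G -> w (to x a) = w x) ->
  (forall x a, a \in G -> to x a = x -> a = 1%g) ->
  (#|G|%:Z %| (\sum_(x : T) w x)%R)%Z.
Proof.
move=> w_inv free.
have actsT : [acts G, on [set: T] | to] by apply/actsP => a _ x; rewrite !inE.
rewrite (eq_bigl (fun x => x \in [set: T])); last by move=> x; rewrite inE.
rewrite (set_partition_big _ (orbit_partition actsT)).
apply: rpred_sum => _ /imsetP[x _ ->].
rewrite (eq_bigr (fun _ => w x)); last by move=> z /orbitP[a Ga <-]; rewrite w_inv.
have stab1 : ('C_G[x | to])%g = 1%g.
  apply/trivgP/subsetP => a /setIP[Ga /astab1P ax]; rewrite inE; apply/eqP.
  exact: free ax.
rewrite sumr_const -(card_orbit_stab to G x) stab1 cards1 muln1.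
by rewrite -mulr_natr dvdz_mull // -natz dvdzz.
Qed.

Lemma count_iota_div y k r : 0 < y ->
  count (fun b => b %/ y == r) (iota 0 (k * y)) = (r < k) * y.
Proof.
move=> y_gt0; elim: k => [|k IHk]; first by rewrite mul0n.
rewrite mulSnr iotaD count_cat IHk add0n -{1}(addn0 (k * y)) iotaDl count_map.
rewrite (@eq_in_count _ _ (fun _ => k == r)); last first.
  move=> c; rewrite mem_iota add0n => /andP[_ c_lt_y] /=.
  by rewrite divnMDl // divn_small // addn0.
have [r_lt_k | k_lt_r | ->] := ltngtP r k.
- by rewrite (count_pred0 _ : count xpred0 _ = 0) addn0 ltnS (ltnW r_lt_k).
- by rewrite (count_pred0 _ : count xpred0 _ = 0) ltnS leqNgt k_lt_r.
- by rewrite (count_predT _ : count xpredT _ = _) size_iota ltnSn mul0n mul1n.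
Qed.

Lemma count_iota_mod y k u : u < y ->
  count (fun b => b %% y == u) (iota 0 (k * y)) = k.
Proof.
move=> u_lt_y; elim: k => [|k IHk]; first by rewrite mul0n.
rewrite mulSnr iotaD count_cat IHk add0n -{1}(addn0 (k * y)) iotaDl count_map.
rewrite (@eq_in_count _ _ (pred1 u)); last first.
  move=> c; rewrite mem_iota add0n => /andP[_ c_lt_y] /=.
  by rewrite modnMDl modn_small.
by rewrite count_uniq_mem ?iota_uniq // mem_iota u_lt_y addn1.
Qed.

Section Rectangle.
Variables k y : nat.
Hypotheses (k_gt0 : 0 < k) (y_gt0 : 0 < y).
Local Notation lam := (nseq k y).
Local Notation n := (sumn (nseq k y)).
Local Open Scope group_scope.

Lemma sumn_rect : n = (k * y)%N.
Proof. by rewrite sumn_nseq mulnC. Qed.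

Lemma row_lt (b : 'I_n) : b %/ y < k.
Proof. by rewrite ltn_divLR // -sumn_rect. Qed.

Lemma box_row_rect (i : nat) : i < n -> box_row lam i = i %/ y.
Proof.
rewrite sumn_rect -ltn_divLR // => i_row.
rewrite /box_row size_nseq (@eq_in_count _ _ (fun r => r < 0 + i %/ y)); last first.
  move=> r; rewrite mem_iota add0n => /andP[_ r_lt_k].
  by rewrite take_nseq // sumn_nseq mulnC -leq_divRL.
by rewrite -size_filter filter_iota_ltn ?size_iota // ltnW.
Qed.

Lemma box_col_rect (i : nat) : i < n -> box_col lam i = i %% y.
Proof.
move=> i_lt_n; rewrite /box_col box_row_rect // take_nseq; last first.
  by rewrite ltnW // ltn_divLR // -sumn_rect.
by rewrite sumn_nseq {1}(divn_eq i y) mulnC addKn.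
Qed.

Lemma card_count (P : pred nat) : #|[set b : 'I_n | P b]| = count P (iota 0 n).
Proof.
rewrite cardsE cardE /enum_mem size_filter -enumT -val_enum_ord count_map.
by apply: eq_count => b; rewrite !inE.
Qed.

Lemma card_row (r : nat) : #|[set b : 'I_n | b %/ y == r]| = nth 0 lam r.
Proof.
rewrite (card_count (fun b => b %/ y == r)) sumn_rect count_iota_div // nth_nseq.
by case: (r < k); rewrite ?mul1n.
Qed.

Lemma card_col (u : nat) : u < y -> #|[set b : 'I_n | b %% y == u]| = k.
Proof.
by move=> u_lt_y; rewrite (card_count (fun b => b %% y == u)) sumn_rect count_iota_mod.
Qed.

Definition entry_col (s : 'S_n) (j : 'I_n) : nat := (s^-1 j) %% y.

Definition sgn (p : 'S_n) : int := ((-1) ^+ odd_perm p)%R.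

Local Notation tab u := (tabloid_of lam u).

Lemma col_stabP (s p : 'S_n) :
  reflect (forall j, entry_col s (p j) = entry_col s j) (col_stab lam s p).
Proof.
apply: (iffP forallP) => [p_col j | p_col j].
  by apply/eqP; rewrite /entry_col -!box_col_rect.
by rewrite !box_col_rect //; apply/eqP; apply: p_col.
Qed.

Lemma row_le_n (b : 'I_n) : b %/ y <= n.
Proof. exact: leq_trans (leq_div _ _) (ltnW (ltn_ord _)). Qed.

Lemma tabloid_ofE (u : 'S_n) (j : 'I_n) : tab u j = inord ((u^-1 j) %/ y).
Proof. by rewrite ffunE box_row_rect. Qed.

Lemma tabloid_eqP (u v : 'S_n) :
  reflect (forall j, (u^-1 j) %/ y = (v^-1 j) %/ y) (tab u == tab v).
Proof.
apply: (iffP eqP) => [uv_eq j | uv_rows].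
  move/ffunP: uv_eq => /(_ j); rewrite !tabloid_ofE => /(congr1 val).
  by rewrite /= !inordK ?ltnS ?row_le_n.
by apply/ffunP => j; rewrite !tabloid_ofE uv_rows.
Qed.

Lemma tabloid_of_is_tabloid (u : 'S_n) : is_tabloid lam (tab u).
Proof.
apply/forallP => r; apply/eqP; rewrite -card_row.
rewrite -(card_imset [set b : 'I_n | b %/ y == r] (@perm_inj _ u)).
apply: eq_card => j; rewrite inE tabloid_ofE -{2}(permKV u j) mem_imset ?inE //.
  by rewrite -val_eqE /= inordK // ltnS row_le_n.
exact: perm_inj.
Qed.

Definition gram_term (s t : 'S_n) (x : 'S_n * 'S_n) : int :=
  ((col_stab lam s x.1 && col_stab lam t x.2 && (tab (s * x.1) == tab (t * x.2)))%:R
    * (sgn x.1 * sgn x.2))%R.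

Lemma gram_pair_sum (s t : 'S_n) :
  gram lam s t = (\sum_(x : 'S_n * 'S_n) gram_term s t x)%R.
Proof.
rewrite /gram /tab_form /polytabloid.
under eq_bigr => T _ do rewrite big_distrlr.
rewrite exchange_big; under eq_bigr => p _ do rewrite exchange_big.
rewrite pair_big /= [RHS](bigID (fun x => col_stab lam s x.1 && col_stab lam t x.2)) /=.
rewrite [X in _ = (_ + X)%R]big1 ?addr0; last first.
  by move=> x /negbTE x_out; rewrite /gram_term x_out mul0r.
apply: eq_bigr => [[p q]] /= /andP[p_s q_t].
rewrite (bigD1 (tab (s * p))) ?tabloid_of_is_tabloid //= [X in (_ + X)%R]big1; last first.
  by move=> T /andP[_ /negbTE]; rewrite eq_sym => ->; rewrite !mulr0 mul0r.
rewrite addr0 /gram_term p_s q_t eqxx mulr1 eq_sym.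
by rewrite /sgn /=; case: (_ == _); rewrite ?mulr1 ?mulr0 ?mul0r ?mul1r.
Qed.

Definition col_group_set (s : 'S_n) : {set 'S_n} := [set p | col_stab lam s p].

Lemma col_group_set_group (s : 'S_n) : group_set (col_group_set s).
Proof.
apply/group_setP; split; first by rewrite inE; apply/col_stabP => j; rewrite perm1.
move=> p q; rewrite !inE => /col_stabP p_col /col_stabP q_col.
by apply/col_stabP => j; rewrite permM q_col p_col.
Qed.
Canonical col_group (s : 'S_n) := Group (col_group_set_group s).

Lemma sgnM (p q : 'S_n) : sgn (p * q) = (sgn p * sgn q)%R.
Proof. by rewrite /sgn odd_permM signr_addb. Qed.

Lemma sgnV (p : 'S_n) : sgn p^-1 = sgn p.
Proof. by rewrite /sgn odd_permV. Qed.

Lemma sgn_sqr (p : 'S_n) : (sgn p * sgn p = 1)%R.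
Proof. by rewrite -expr2 sqrr_sign. Qed.

(* <e_s, e_s> = |C_s|: distinct elements of C_s move s to distinct tabloids,
   since an entry is determined by its row and its column in s. *)
Lemma gram_diag (s : 'S_n) : gram lam s s = Posz #|col_group s|.
Proof.
have tab_inj p q : p \in col_group s -> q \in col_group s ->
    tab (s * p) == tab (s * q) -> p = q.
  rewrite !inE => /col_stabP p_col /col_stabP q_col /tabloid_eqP same_rows.
  apply: invg_inj; apply/permP => j; apply: (@perm_inj _ s^-1); apply: val_inj => /=.
  have := same_rows j; rewrite !invMg !permM => same_row.
  have col_pV : entry_col s (p^-1 j) = entry_col s j by rewrite -{2}(permKV p j) p_col.
  have col_qV : entry_col s (q^-1 j) = entry_col s j by rewrite -{2}(permKV q j) q_col.
  rewrite (divn_eq (s^-1 (p^-1 j)) y) (divn_eq (s^-1 (q^-1 j)) y) same_row.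
  by move: col_pV col_qV; rewrite /entry_col => -> ->.
rewrite gram_pair_sum (eq_bigr (fun x => ((x.1 \in col_group s) && (x.2 == x.1))%:R%R)).
  rewrite -(pair_bigA _ (fun p q => ((p \in col_group s) && (q == p))%:R%R)) /=.
  rewrite (eq_bigr (fun p => ((p \in col_group s) : nat)%:R%R)).
    rewrite -natr_sum -sum1_card natz; congr Posz.
    by rewrite [RHS]big_mkcond; apply: eq_bigr => p _; case: (p \in _).
  move=> p _; rewrite (bigD1 p) //= eqxx andbT big1 ?addr0 // => q /negbTE ->.
  by rewrite andbF.
move=> [p q] _; rewrite /gram_term /= -!(in_set (col_stab lam s)).
case p_s: (p \in col_group s); last by rewrite /= mul0r.
have [-> | q_ne_p] := eqVneq q p; first by rewrite p_s eqxx /= sgn_sqr mulr1.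
case q_s: (q \in col_group s); last by rewrite /= mul0r.
case same_tab: (tab (s * p) == tab (s * q)); last by rewrite /= mul0r.
by case/eqP: q_ne_p; rewrite (tab_inj p q).
Qed.

Lemma gram_diag_neq0 (s : 'S_n) : gram lam s s != 0%R.
Proof. by rewrite gram_diag; have := cardG_gt0 (col_group s); case: #|_|. Qed.

Definition shape_symmetry (b : 'S_n) : Prop :=
  (forall i, b i %% y = i %% y) /\
  (forall i i', (b i %/ y == b i' %/ y) = (i %/ y == i' %/ y)).

(* The permutation of entries induced on the tableau s by moving boxes by b. *)
Definition box_relabel (s b : 'S_n) : 'S_n := b^-1 ^ s.

Lemma box_relabelE (s b : 'S_n) (j : 'I_n) : box_relabel s b j = s (b^-1 (s^-1 j)).
Proof. by rewrite /box_relabel conjgE !permM. Qed.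

Lemma box_relabel_col (s b : 'S_n) : shape_symmetry b -> box_relabel s b \in col_group s.
Proof.
move=> [b_col _]; rewrite inE; apply/col_stabP => j.
by rewrite /entry_col box_relabelE permK -{2}(permKV b (s^-1 j)) b_col.
Qed.

Lemma relabel_tableauV (s b p q : 'S_n) (j : 'I_n) :
  (s * (box_relabel s b * p * q))^-1 j = b ((s * p)^-1 (q^-1 j)).
Proof. by rewrite /box_relabel !conjgE !invMg !invgK !permM permK. Qed.

Definition pair_act (s t : 'S_n) (x h : 'S_n * 'S_n) : 'S_n * 'S_n :=
  (box_relabel s h.1 * x.1 * h.2, box_relabel t h.1 * x.2 * h.2).

Lemma pair_act1 (s t : 'S_n) : (pair_act s t)^~ 1 =1 id.
Proof. by move=> [p q]; rewrite /pair_act /box_relabel /= invg1 !conj1g !mul1g !mulg1. Qed.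

Lemma pair_actM (s t : 'S_n) (x : 'S_n * 'S_n) : act_morph (pair_act s t) x.
Proof.
move=> [b1 q1] [b2 q2]; case: x => p q.
by rewrite /pair_act /box_relabel /= !invMg !conjMg !mulgA.
Qed.

Definition pair_action (s t : 'S_n) := TotalAction (pair_act1 s t) (pair_actM s t).

Definition common_col (s t : 'S_n) : {group 'S_n} := (col_group s :&: col_group t)%G.

Lemma gram_term_act (s t b q : 'S_n) (x : 'S_n * 'S_n) :
  shape_symmetry b -> q \in common_col s t ->
  gram_term s t (pair_act s t x (b, q)) = gram_term s t x.
Proof.
move=> b_shape /setIP[q_s q_t]; case: x => p1 p2.
have in_col (u p : 'S_n) : q \in col_group u ->
    (box_relabel u b * p * q \in col_group u) = (p \in col_group u).
  by move=> q_u; rewrite groupMr // groupMl // box_relabel_col.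
have same_tab : (tab (s * (box_relabel s b * p1 * q)) == tab (t * (box_relabel t b * p2 * q)))
    = (tab (s * p1) == tab (t * p2)).
  case: b_shape => _ b_rows.
  apply/tabloid_eqP/tabloid_eqP => rows_eq j.
    by have := rows_eq (q j); rewrite !relabel_tableauV permK => /eqP; rewrite b_rows => /eqP.
  by rewrite !relabel_tableauV; apply/eqP; rewrite b_rows rows_eq.
move: (in_col s p1 q_s) (in_col t p2 q_t); rewrite !inE /gram_term /= => -> ->.
rewrite same_tab !sgnM !sgnV; congr (_ * _)%R.
set a := sgn s; set c := sgn t; set d := sgn b; set e := sgn q.
have -> : (a * (d * a) * sgn p1 * e * (c * (d * c) * sgn p2 * e) =
    (a * a) * (c * c) * (d * d) * (e * e) * (sgn p1 * sgn p2))%R by ring.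
by rewrite !sgn_sqr !mul1r.
Qed.

Definition common_fixed_entry (s t : 'S_n) : Prop :=
  exists e, forall q, q \in common_col s t -> q e = e.

(* The action is free on the subgroup V x (C_s :&: C_t) as soon as the
   nontrivial elements of V move every box and C_s :&: C_t fixes an entry e:
   comparing the images of p^-1 e shows that b fixes a box. *)
Lemma pair_act_free (s t b q : 'S_n) (x : 'S_n * 'S_n) :
  (b = 1 \/ (forall i, b i != i) /\ common_fixed_entry s t) ->
  q \in common_col s t -> pair_act s t x (b, q) = x -> (b, q) = 1.
Proof.
case: x => p1 p2 b_cases Kq [act_p1 _].
suff b1 : b = 1.
  move: act_p1; rewrite b1 /box_relabel invg1 conj1g mul1g -{2}(mulg1 p1).
  by move/mulgI => ->.
case: b_cases => [// | [b_fpf [e e_fixed]]].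
have := congr1 (fun f : 'S_n => f (p1^-1 e)) act_p1.
rewrite /= !permM permKV -{2}(e_fixed q Kq) => /perm_inj /(congr1 p1^-1).
rewrite permK; set z := s^-1 (p1^-1 e).
rewrite -{1}(permKV s (p1^-1 e)) -/z => /perm_inj b_fix.
by have := b_fpf z; rewrite -{1}b_fix permKV eqxx.
Qed.

Lemma gram_dvd_free (s t : 'S_n) (V : {group 'S_n}) :
  {in V, forall b : 'S_n, shape_symmetry b} ->
  {in V, forall b : 'S_n, b != 1 -> (forall i, b i != i) /\ common_fixed_entry s t} ->
  ((#|V| * #|common_col s t|)%:Z %| gram lam s t)%Z.
Proof.
move=> V_shape V_free; rewrite gram_pair_sum -cardsX.
apply: (@free_action_dvd_sum _ _ (pair_action s t) (setX_group V (common_col s t))).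
  by move=> x [b q] /setXP[Vb Kq]; apply: gram_term_act => //; apply: V_shape.
move=> x [b q] /setXP[Vb Kq]; apply: pair_act_free Kq.
by have [-> | b_ne1] := eqVneq b 1; [left | right; apply: V_free].
Qed.

(* The cell (u, v): entries lying in column u of s and in column v of t.
   The cells partition the entries, and C_s :&: C_t is the product of the
   symmetric groups of the cells. *)
Definition cell (s t : 'S_n) (uv : 'I_y * 'I_y) : {set 'I_n} :=
  [set j | (entry_col s j == uv.1) && (entry_col t j == uv.2)].

Lemma common_col_cell (s t : 'S_n) uv (q : 'S_n) (j : 'I_n) :
  q \in common_col s t -> (q j \in cell s t uv) = (j \in cell s t uv).
Proof. by move=> /setIP[]; rewrite !inE => /col_stabP q_s /col_stabP q_t; rewrite q_s q_t. Qed.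

Lemma sym_cell_sub (s t : 'S_n) uv : Sym (cell s t uv) \subset common_col s t.
Proof.
apply/subsetP => q; rewrite inE => q_on.
have q_cols j : entry_col s (q j) = entry_col s j /\ entry_col t (q j) = entry_col t j.
  case j_in: (j \in cell s t uv); last by rewrite (out_perm q_on) ?j_in.
  have qj_in : q j \in cell s t uv by rewrite (perm_closed _ q_on) j_in.
  move: j_in qj_in; rewrite !inE => /andP[/eqP -> /eqP ->] /andP[/eqP -> /eqP ->].
  by [].
by apply/setIP; split; rewrite inE; apply/col_stabP => j; case: (q_cols j).
Qed.

Local Notation cell_prod s t := (\prod_(uv : 'I_y * 'I_y) #|cell s t uv|`!)%N.

Lemma prod_fact_cells_dvd (s t : 'S_n) : cell_prod s t %| #|common_col s t|.
Proof.
apply: prod_fact_dvd_card; first exact: index_enum_uniq.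
- move=> [u1 v1] [u2 v2] _ _ uv_ne; rewrite -setI_eq0; apply/eqP/setP => j.
  rewrite !inE; apply/negP => /andP[/andP[/eqP ju1 /eqP jv1] /andP[/eqP ju2 /eqP jv2]].
  have u12 : u1 = u2 by apply: val_inj; rewrite /= -ju1 -ju2.
  have v12 : v1 = v2 by apply: val_inj; rewrite /= -jv1 -jv2.
  by move: uv_ne; rewrite u12 v12 eqxx.
- by move=> uv _; apply: sym_cell_sub.
- by move=> uv _ q Kq j; apply: common_col_cell.
Qed.

Lemma singleton_cell_fixed (s t : 'S_n) uv :
  #|cell s t uv| = 1%N -> common_fixed_entry s t.
Proof.
move=> /eqP /cards1P [e cell_e]; exists e => q Kq.
have : q e \in cell s t uv by rewrite common_col_cell // cell_e set11.
by rewrite cell_e => /set1P.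
Qed.

Lemma card_entry_col (s : 'S_n) (u : nat) : u < y -> #|[set j | entry_col s j == u]| = k.
Proof.
move=> u_lt_y; apply: etrans (card_col _ u_lt_y).
rewrite -(card_imset [set b : 'I_n | b %% y == u] (@perm_inj _ s)).
apply: eq_card => j; rewrite inE /entry_col -{2}(permKV s j) mem_imset ?inE //.
exact: perm_inj.
Qed.

Lemma sum_card_fiber (f g : 'I_n -> nat) (u : nat) : (forall j, g j < y) ->
  \sum_(v : 'I_y) #|[set j | (f j == u) && (g j == v)]| = #|[set j | f j == u]|.
Proof.
move=> g_lt_y; rewrite -sum1_card.
transitivity (\sum_(v : 'I_y) \sum_(j in [set j | (f j == u) && (g j == v)]) 1).
  by apply: eq_bigr => v _; rewrite sum1_card.
rewrite (exchange_big_dep (fun j => j \in [set j | f j == u])) /=; last first.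
  by move=> v j _; rewrite !inE => /andP[].
apply: eq_bigr => j; rewrite inE => fj.
rewrite (big_pred1 (Ordinal (g_lt_y j))) // => v /=.
by rewrite inE fj /= -val_eqE /= eq_sym.
Qed.

Lemma entry_col_lt (s : 'S_n) (j : 'I_n) : entry_col s j < y.
Proof. exact: ltn_pmod. Qed.

Lemma cell_row_sum (s t : 'S_n) (u : 'I_y) : \sum_(v : 'I_y) #|cell s t (u, v)| = k.
Proof.
rewrite (sum_card_fiber (entry_col s) (entry_col t) u (entry_col_lt t)).
exact: card_entry_col.
Qed.

Lemma cell_col_sum (s t : 'S_n) (v : 'I_y) : \sum_(u : 'I_y) #|cell s t (u, v)| = k.
Proof.
apply: etrans _ (card_entry_col t _ (ltn_ord v)).
rewrite -(sum_card_fiber (entry_col t) (entry_col s) v (entry_col_lt s)).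
by apply: eq_bigr => u _; apply: eq_card => j; rewrite !inE andbC.
Qed.

Definition rotate_box (a : nat) (i : 'I_n) : 'I_n :=
  insubd i (((i %/ y + a) %% k) * y + i %% y).

Lemma rotate_boxE (a : nat) (i : 'I_n) :
  rotate_box a i = ((i %/ y + a) %% k) * y + i %% y :> nat.
Proof.
rewrite val_insubd; case: ifP => // /negP[].
apply: leq_trans (eq_leq (esym sumn_rect)).
have row_lt_k : (i %/ y + a) %% k < k := ltn_pmod _ k_gt0.
have col_lt_y : i %% y < y := ltn_pmod _ y_gt0.
by nia.
Qed.

Lemma rotate_box_row (a : nat) (i : 'I_n) : rotate_box a i %/ y = (i %/ y + a) %% k.
Proof. by rewrite rotate_boxE divnMDl // (divn_small (ltn_pmod i y_gt0)) addn0. Qed.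

Lemma rotate_box_col (a : nat) (i : 'I_n) : rotate_box a i %% y = i %% y.
Proof. by rewrite rotate_boxE modnMDl modn_mod. Qed.

Lemma rotate_box_inj (a : nat) : injective (rotate_box a).
Proof.
move=> i j rot_eq; apply: val_inj => /=.
have same_col : i %% y = j %% y by rewrite -(rotate_box_col a i) rot_eq rotate_box_col.
have : (i %/ y + a) %% k = (j %/ y + a) %% k by rewrite -!rotate_box_row rot_eq.
move/eqP; rewrite eqn_modDr !modn_small ?row_lt // => /eqP same_row.
by rewrite (divn_eq i y) (divn_eq j y) same_row same_col.
Qed.

Definition rotation (a : nat) : 'S_n := perm (rotate_box_inj a).

Lemma rotationE (a : nat) (i : 'I_n) : rotation a i = rotate_box a i.
Proof. by rewrite permE. Qed.

Lemma rotationD (a b : nat) : rotation a * rotation b = rotation (a + b).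
Proof.
apply/permP => i; rewrite permM !rotationE; apply: val_inj.
by rewrite /= [LHS]rotate_boxE rotate_box_row rotate_box_col rotate_boxE modnDml addnA.
Qed.

Lemma rotation_mod (a : nat) : rotation (a %% k) = rotation a.
Proof.
by apply/permP => i; rewrite !rotationE; apply: val_inj; rewrite /= !rotate_boxE modnDmr.
Qed.

Lemma rotation0 : rotation 0 = 1.
Proof.
apply/permP => i; rewrite perm1 rotationE; apply: val_inj.
by rewrite /= rotate_boxE addn0 modn_small ?row_lt // -divn_eq.
Qed.

Definition rotations : {set 'S_n} := [set rotation a | a : 'I_k].

Lemma rotations_group_set : group_set rotations.
Proof.
apply/group_setP; split; first by apply/imsetP; exists (Ordinal k_gt0); rewrite ?rotation0.
move=> _ _ /imsetP[a _ ->] /imsetP[b _ ->]; apply/imsetP.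
by exists (Ordinal (ltn_pmod (a + b) k_gt0)); rewrite //= rotationD rotation_mod.
Qed.
Canonical rotation_group := Group rotations_group_set.

Lemma card_rotations : #|rotation_group| = k.
Proof.
have box0 : 0 < n by rewrite sumn_rect muln_gt0 k_gt0.
rewrite card_imset ?card_ord // => a b /(congr1 (fun p : 'S_n => val (p (Ordinal box0)))).
rewrite /= !rotationE !rotate_boxE div0n mod0n !add0n !addn0 !modn_small //.
by move/eqP; rewrite eqn_pmul2r // => /eqP /val_inj.
Qed.

Lemma rotation_shape (b : 'S_n) : b \in rotation_group -> shape_symmetry b.
Proof.
case/imsetP => a _ ->; split => [i | i i']; first by rewrite rotationE rotate_box_col.
by rewrite !rotationE !rotate_box_row eqn_modDr !modn_small ?row_lt.
Qed.

Lemma rotation_fpf (b : 'S_n) : b \in rotation_group -> b != 1 -> forall i, b i != i.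
Proof.
case/imsetP => a _ -> a_ne0 i; apply: contraNneq a_ne0 => rot_i.
have : (i %/ y + a) %% k = (i %/ y + 0) %% k.
  by rewrite addn0 (modn_small (row_lt i)) -rotate_box_row -rotationE rot_i.
by move/eqP; rewrite eqn_modDl mod0n modn_small // => /eqP ->; rewrite rotation0.
Qed.

Lemma gram_dvd_cells (s t : 'S_n) (d : nat) :
  d %| cell_prod s t -> (d%:Z %| gram lam s t)%Z.
Proof.
move=> d_dvd; apply: dvdz_trans (@gram_dvd_free s t 1%G _ _).
- by rewrite cards1 mul1n dvdzE; apply: dvdn_trans d_dvd (prod_fact_cells_dvd s t).
- by move=> b; rewrite inE => /eqP ->; split => [i | i i']; rewrite !perm1.
- by move=> b; rewrite inE => /eqP ->; rewrite eqxx.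
Qed.

Lemma gram_dvd_cells_rot (s t : 'S_n) (d : nat) :
  d %| cell_prod s t -> (exists uv, #|cell s t uv| = 1%N) ->
  ((k * d)%N%:Z %| gram lam s t)%Z.
Proof.
move=> d_dvd [uv single]; apply: dvdz_trans (@gram_dvd_free s t rotation_group _ _).
- rewrite card_rotations dvdzE /= dvdn_pmul2l //.
  exact: dvdn_trans d_dvd (prod_fact_cells_dvd s t).
- exact: rotation_shape.
- move=> b b_rot b_ne1; split; first exact: rotation_fpf.
  exact: singleton_cell_fixed single.
Qed.

End Rectangle.

(* Lower bound on the Schaper number from a uniform divisibility: the bound
   in the definition is harmless since <e_1, e_1> is a nonzero term of it. *)
Lemma schaper_number_ge (p : nat) (lam : seq nat) (e : nat) : 1 < p ->
  (forall s t, ((p ^ e)%:Z %| gram lam s t)%Z) -> gram lam 1%g 1%g != 0%R ->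
  e <= schaper_number p lam.
Proof.
move=> p_gt1 gram_dvd gram11_neq0.
set B := (\sum_(s : 'S_(sumn lam)) \sum_(t : 'S_(sumn lam)) absz (gram lam s t))%N.
have pe_le_B : p ^ e <= B.
  apply: leq_trans (dvdn_leq _ (gram_dvd 1%g 1%g)) _; first by rewrite absz_gt0.
  by rewrite /B (bigD1 1%g) //= (bigD1 1%g) //= -addnA leq_addr.
have e_lt : e < B.+1 by apply: leq_trans (ltn_expl e p_gt1) (leq_trans pe_le_B _).
rewrite /schaper_number -/B.
apply: leq_trans (@leq_bigmax_cond _ _ (fun i : 'I_B.+1 => nat_of_ord i) (Ordinal e_lt) _) => //.
by apply/forallP => s; apply/forallP => t; apply: gram_dvd.
Qed.

Definition cell_bound {y : nat} (e : nat) (m : 'I_y * 'I_y -> nat) : Prop :=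
  2 ^ e.+2 %| \prod_(uv : 'I_y * 'I_y) (m uv)`! \/
  (2 ^ e %| \prod_(uv : 'I_y * 'I_y) (m uv)`! /\ exists uv, m uv = 1).

(* Four rows: the bound turns into divisibility of <e_s, e_t> by 2^(e+2),
   since the rotation group has order 4. *)
Lemma gram_dvd_cell_bound (y e : nat) (s t : 'S_(sumn (nseq 4 y))) : 0 < y ->
  cell_bound e (fun uv => #|cell 4 y s t uv|) -> ((2 ^ e.+2)%:Z %| gram (nseq 4 y) s t)%Z.
Proof.
move=> y_gt0 [dvd_prod | [dvd_prod single]]; first exact: gram_dvd_cells.
by rewrite (_ : 2 ^ e.+2 = 4 * 2 ^ e)%N ?expnS ?mulnA //; apply: gram_dvd_cells_rot.
Qed.

(* A 2 x 2 table with all margins 4 is [[a, 4 - a], [4 - a, a]]. *)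
Lemma factorials_2x2 {a b c d : nat} : a + b = 4 -> c + d = 4 -> a + c = 4 ->
  let P := a`! * b`! * c`! * d`! in
  (2 ^ 4 %| P) || (2 ^ 2 %| P) && (1 \in [:: a; b; c; d]).
Proof.
move=> ab4 cd4 ac4; have -> : b = 4 - a by lia.
have -> : c = 4 - a by lia.
have -> : d = a by lia.
have : a < 5 by lia.
by move: a {ab4 cd4 ac4}; do 5 case=> //.
Qed.

Lemma cell_bound_2x2 (m : 'I_2 * 'I_2 -> nat) :
  (forall u : 'I_2, \sum_(v < 2) m (u, v) = 4) ->
  (forall v : 'I_2, \sum_(u < 2) m (u, v) = 4) -> cell_bound 2 m.
Proof.
move=> row_sum col_sum; set i1 : 'I_2 := lift ord0 ord0.
have := row_sum ord0; have := row_sum i1; have := col_sum ord0.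
rewrite !big_ord_recl !big_ord0 !addn0 /cell_bound -/i1.
rewrite (eq_bigr (fun uv => (m (uv.1, uv.2))`!)); last by case.
rewrite -(pair_bigA _ (fun u v => (m (u, v))`!)) !big_ord_recl !big_ord0 /= !muln1 !mulnA -/i1.
move=> ac4 cd4 ab4; have /orP[dvd4 | /andP[dvd2 has1]] := factorials_2x2 ab4 cd4 ac4.
  by left.
right; split => //; apply/exists_eqP; apply: contraLR has1.
by rewrite negb_exists => /forallP m_ne1; rewrite !inE !(eq_sym 1) !(negbTE (m_ne1 _)).
Qed.

(* A 3 x 3 table with all margins 4 is determined by its entries a, b, d, e;
   the bound is checked on the 5^4 candidates by computation. *)
Definition factorials_ok_3x3 (a b c d e f g h i : nat) : bool :=
  let P := a`! * b`! * c`! * d`! * e`! * f`! * g`! * h`! * i`! in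
  (2 ^ 5 %| P) || (2 ^ 3 %| P) && (1 \in [:: a; b; c; d; e; f; g; h; i]).

Definition all_tables_ok_3x3 : bool :=
  all (fun a => all (fun b => all (fun d => all (fun e =>
    let c := 4 - a - b in let f := 4 - d - e in let g := 4 - a - d in
    let h := 4 - b - e in let i := 4 - c - f in
    [&& a + b <= 4, d + e <= 4, a + d <= 4, b + e <= 4, c + f <= 4 & g + h + i == 4]
      ==> factorials_ok_3x3 a b c d e f g h i)
  (iota 0 5)) (iota 0 5)) (iota 0 5)) (iota 0 5).

Lemma all_tables_ok_3x3_true : all_tables_ok_3x3.
Proof. by vm_compute. Qed.

Lemma factorials_3x3 {a b c d e f g h i : nat} :
  a + b + c = 4 -> d + e + f = 4 -> g + h + i = 4 ->
  a + d + g = 4 -> b + e + h = 4 -> c + f + i = 4 ->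
  factorials_ok_3x3 a b c d e f g h i.
Proof.
move=> abc def ghi adg beh cfi.
have [a4 b4 d4 e4] : [/\ a <= 4, b <= 4, d <= 4 & e <= 4] by split; lia.
have in_range x : x <= 4 -> x \in iota 0 5 by rewrite mem_iota.
have /allP/(_ a (in_range a a4))/allP/(_ b (in_range b b4))/allP/(_ d (in_range d d4))
     /allP/(_ e (in_range e e4)) := all_tables_ok_3x3_true.
cbv zeta.
have -> : 4 - a - b = c by lia.
have -> : 4 - d - e = f by lia.
have -> : 4 - a - d = g by lia.
have -> : 4 - b - e = h by lia.
have -> : 4 - c - f = i by lia.
rewrite ghi eqxx andbT => /implyP; apply.
by apply/and5P; split; apply/leP; lia.
Qed.

Lemma cell_bound_3x3 (m : 'I_3 * 'I_3 -> nat) :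
  (forall u : 'I_3, \sum_(v < 3) m (u, v) = 4) ->
  (forall v : 'I_3, \sum_(u < 3) m (u, v) = 4) -> cell_bound 3 m.
Proof.
move=> row_sum col_sum; set i2 : 'I_3 := lift ord0 (lift ord0 ord0).
have := row_sum ord0; have := row_sum (lift ord0 ord0); have := row_sum i2.
have := col_sum ord0; have := col_sum (lift ord0 ord0); have := col_sum i2.
rewrite !big_ord_recl !big_ord0 !addn0 !addnA /cell_bound -/i2.
rewrite (eq_bigr (fun uv => (m (uv.1, uv.2))`!)); last by case.
rewrite -(pair_bigA _ (fun u v => (m (u, v))`!)) !big_ord_recl !big_ord0 /= !muln1 !mulnA.
rewrite -/i2 => c2 c1 c0 r2 r1 r0.
have /orP[dvd5 | /andP[dvd3 has1]] := factorials_3x3 r0 r1 r2 c0 c1 c2; first by left.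
right; split => //; apply/exists_eqP; apply: contraLR has1.
by rewrite negb_exists => /forallP m_ne1; rewrite !inE !(eq_sym 1) !(negbTE (m_ne1 _)).
Qed.

Theorem mainTheorem5 :
  4 <= schaper_number 2 (nseq 4 2) /\ 5 <= schaper_number 2 (nseq 4 3).
Proof.
split; apply: schaper_number_ge => //; try exact: gram_diag_neq0.
- move=> s t; apply: gram_dvd_cell_bound => //.
  by apply: cell_bound_2x2; [apply: cell_row_sum | apply: cell_col_sum].
- move=> s t; apply: gram_dvd_cell_bound => //.
  by apply: cell_bound_3x3; [apply: cell_row_sum | apply: cell_col_sum].
Qed.
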